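(* Let $n\ge2$ and let $f(u)=\sum_{l=0}^\infty a_l(u-u_0)^l$ be a power series in the polar $n$-complex variable $u$, with polar $n$-complex coefficients $a_l$ and center $u_0$, converging absolutely on an open set $U\subseteq\mathbb{R}^n$ (identifying $u$ with $(x_0,\dots,x_{n-1})$). Write $f(u)=\sum_{k=0}^{n-1}h_kP_k(x_0,\dots,x_{n-1})$ with real functions $P_k$. Then on $U$, for every $k\in\{0,\dots,n-1\}$, $$\frac{\partial P_k}{\partial x_0}=\frac{\partial P_{k+1}}{\partial x_1}=\cdots=\frac{\partial P_{n-1}}{\partial x_{n-k-1}}=\frac{\partial P_0}{\partial x_{n-k}}=\cdots=\frac{\partial P_{k-1}}{\partial x_{n-1}},$$ i.e. $\partial P_{(k+j)\bmod n}/\partial x_j$ does not depend on $j\in\{0,\dots,n-1\}$.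
   Context: Polar $n$-complex numbers: $u=x_0+h_1x_1+\cdots+h_{n-1}x_{n-1}$, $x_j\in\mathbb{R}$, $h_0=1$, componentwise addition, bilinear multiplication $h_jh_k=h_{(j+k)\bmod n}$. *)

From HB Require Import structures.
From mathcomp Require Import all_boot all_order all_algebra.
From mathcomp Require Import all_classical all_reals all_analysis.
Set Implicit Arguments. Unset Strict Implicit. Unset Printing Implicit Defensive.
Import Order.TTheory GRing.Theory Num.Theory.
Import numFieldNormedType.Exports.
Local Open Scope ring_scope.

(* Polar n-complex numbers u = x_0 + h_1 x_1 + ... + h_{n-1} x_{n-1},
   represented by the real row vector (x_0, ..., x_{n-1}) : 'rV[R]_n. *)

(* bilinear multiplication with h_j h_k = h_{(j+k) mod n} *)
Definition pcmul (R : realType) (n : nat) (u v : 'rV[R]_n) : 'rV[R]_n :=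
  \row_(m < n) \sum_(j < n) \sum_(k < n | ((j + k) %% n)%N == (m : nat))
      u 0 j * v 0 k.

Definition pcone (R : realType) (n : nat) : 'rV[R]_n :=
  \row_(m < n) ((m : nat) == 0%N)%:R.

Definition pcpow (R : realType) (n : nat) (u : 'rV[R]_n) (l : nat) : 'rV[R]_n :=
  iter l (pcmul u) (pcone R n).

Definition pcterm (R : realType) (n : nat) (a : nat -> 'rV[R]_n) (u0 u : 'rV[R]_n)
  (l : nat) : 'rV[R]_n := pcmul (a l) (pcpow (u - u0) l).

Definition pcseries (R : realType) (n : nat) (a : nat -> 'rV[R]_n) (u0 u : 'rV[R]_n)
  : 'rV[R]_n := limn (series (pcterm a u0 u)).

Definition pccomp (R : realType) (n : nat) (a : nat -> 'rV[R]_n) (u0 : 'rV[R]_n)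
  (k : 'I_n) (x : 'rV[R]_n) : R := pcseries a u0 x 0 k.

Definition pcbasis (R : realType) (n : nat) (j : 'I_n) : 'rV[R]_n := delta_mx 0 j.

From HB Require Import structures.
From mathcomp Require Import all_boot all_order all_algebra.
From mathcomp Require Import all_classical all_reals all_analysis.
From mathcomp Require Import cyclic separable cyclotomic complex zify ring.
Import Order.TTheory GRing.Theory Num.Theory.
Import numFieldNormedType.Exports.
Set Implicit Arguments. Unset Strict Implicit. Unset Printing Implicit Defensive.
Local Open Scope ring_scope.
Local Open Scope classical_set_scope.
Local Open Scope complex_scope.
Import Normc.

(* For an n-th root of unity z, the map chi_z : u |-> sum_j x_j z^j is a real-linear
   ring morphism from the polar n-complex numbers to C, and for a primitive root w the
   n characters chi_{w^p} determine u (discrete Fourier inversion), with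
   |u| <= sum_p |chi_{w^p} u|.  Under chi = chi_{w^p}, f becomes the ordinary complex
   power series sum_l chi(a_l) z^l in z = chi(u - u_0), which converges absolutely a little
   beyond |chi(x - u_0)| because U is open: move x radially away from u_0.  The usual
   second-order bound on (z + s)^l - z^l - l z^(l-1) s then shows, uniformly in p, that the
   difference quotient of f at x in direction h_j tends to f'(x) h_j, where
   f' = sum_l l a_l (u - u_0)^(l-1).  Multiplying by h_j shifts coordinates cyclically, so
   dP_((k+j) mod n)/dx_j is the k-th coordinate of f'(x) for every j. *)

(* The argument of [C_prim_root_exists], for an arbitrary numClosedFieldType. *)
Lemma closed_prim_root_exists (F : numClosedFieldType) n :
  (0 < n)%N -> {z : F | n.-primitive_root z}.
Proof.
pose p : {poly F} := 'X^n - 1; have [r Dp] := closed_field_poly_normal p.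
move=> n_gt0; apply/sigW; rewrite (monicP _) ?monicXnsubC // scale1r in Dp.
have rn1 : all n.-unity_root r by apply/allP=> z; rewrite -root_prod_XsubC -Dp.
have sz_r : (n < (size r).+1)%N.
  by rewrite -(size_prod_XsubC r id) -Dp size_XnsubC.
have [|z] := hasP (has_prim_root n_gt0 rn1 _ sz_r); last by exists z.
by rewrite -separable_prod_XsubC -Dp separable_Xn_sub_1 // pnatr_eq0 -lt0n.
Qed.

Lemma sum_expr_prim_root (F : idomainType) n (w : F) m : n.-primitive_root w ->
  \sum_(p < n) (w ^+ m) ^+ p = if (n %| m)%N then n%:R else 0.
Proof.
move=> pw; rewrite (prim_order_dvd pw); case: ifP => [/eqP ->|wm].
  by under eq_bigr do rewrite expr1n; rewrite sumr_const card_ord.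
have : (w ^+ m) ^+ n - 1 = 0.
  by rewrite -exprM mulnC exprM (prim_expr_order pw) expr1n subrr.
by rewrite subrX1 => /eqP; rewrite mulf_eq0 subr_eq0 wm => /eqP.
Qed.

Lemma dvdn_add_subn_ord n (j k : 'I_n) : (n %| j + (n - k))%N = (j == k).
Proof.
case: j k => j ltjn [k ltkn]; rewrite -val_eqE /=.
apply/idP/eqP => [/dvdnP[q] | ->]; last by rewrite subnKC ?dvdnn // ltnW.
by case: q => [|[|q]] /=; lia.
Qed.

Lemma normc_ge0 (R : rcfType) (z : R[i]) : 0 <= normc z.
Proof. by case: z => a b; rewrite /normc sqrtr_ge0. Qed.

Lemma normc_sum (R : rcfType) (I : Type) (r : seq I) (F : I -> R[i]) :
  normc (\sum_(i <- r) F i) <= \sum_(i <- r) normc (F i).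
Proof. exact: (@ler_norm_sum _ (Rcomplex R)). Qed.

Lemma normc_real (R : rcfType) (r : R) : normc r%:C = `|r|.
Proof. by rewrite /normc /= expr0n /= addr0 sqrtr_sqr. Qed.

Lemma normc_nat (R : rcfType) k : normc (k%:R : R[i]) = k%:R.
Proof. by rewrite -(rmorph_nat (real_complex R)) normc_real normr_nat. Qed.

Lemma normcX (R : rcfType) (z : R[i]) k : normc (z ^+ k) = normc z ^+ k.
Proof. by elim: k => [|k IH]; rewrite ?normc1 // !exprS normcM IH. Qed.

Lemma normc_unity_root (R : rcfType) n (z : R[i]) :
  (0 < n)%N -> z ^+ n = 1 -> normc z = 1.
Proof.
by move=> n0 zn; apply/eqP; rewrite -(pexpr_eq1 n0 (normc_ge0 z)) -normcX zn normc1.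
Qed.

Lemma norm_entry_le (R : realDomainType) n (u : 'rV[R]_n) j : `|u 0 j| <= `|u|.
Proof.
rewrite [`|u|]mx_normrE.
exact: (le_bigmax 0 (fun ij : 'I_1 * 'I_n => `|u ij.1 ij.2|) (0, j)).
Qed.

Lemma norm_le_entries (R : realDomainType) n (u : 'rV[R]_n) c :
  0 <= c -> (forall j, `|u 0 j| <= c) -> `|u| <= c.
Proof.
move=> c0 le_uc; rewrite [`|u|]mx_normrE; apply: bigmax_le => // [[i j]] _ /=.
by rewrite (ord1 i).
Qed.

(* [normed_cvg] does not apply here: ['rV[R]_n] is complete and normed, but is not
   declared a [completeNormedModType]. *)
Lemma normed_cvg_rV (R : realType) n (u : nat -> 'rV[R]_n) :
  cvgn (series (fun l => `|u l|)) -> cvgn (series u).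
Proof.
move=> /cauchy_cvgP/cauchy_seriesP u_ncvg.
apply/cauchy_cvgP/cauchy_seriesP => e /u_ncvg; apply: filterS => m /=.
by rewrite ger0_norm ?sumr_ge0 //; apply: le_lt_trans; apply: ler_norm_sum.
Qed.

Lemma cvg_rV_entry (R : realType) n (v : nat -> 'rV[R]_n) (l : 'rV[R]_n) m :
  v @ \oo --> l -> (fun N => v N 0 m) @ \oo --> l 0 m.
Proof. exact: continuous_cvg (@coord_continuous R 1 n 0 m l). Qed.

Lemma pcone_basis (R : realType) n (n0 : (0 < n)%N) :
  pcone R n = pcbasis R (Ordinal n0).
Proof. by apply/rowP => m; rewrite !mxE -val_eqE. Qed.

Lemma norm_pcbasis_le1 (R : realType) n (j : 'I_n) : `|pcbasis R j| <= 1.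
Proof.
by apply: norm_le_entries => // m; rewrite !mxE eqxx; case: eqP; rewrite ?normr1 ?normr0.
Qed.

Lemma pcmul_basis_entry (R : realType) n (v : 'rV[R]_n) (k j i : 'I_n) :
  (i : nat) = ((k + j) %% n)%N -> pcmul v (pcbasis R j) 0 i = v 0 k.
Proof.
move=> hi; rewrite mxE.
transitivity (\sum_(m < n) if m == k then v 0 m else 0).
  apply: eq_bigr => m _; rewrite big_mkcond (bigD1 j) //= big1 => [|l /negbTE nlj].
    by rewrite !mxE !eqxx mulr1 addr0 hi eqn_modDr !modn_small // val_eqE.
  by rewrite !mxE nlj mulr0 if_same.
by rewrite -big_mkcond big_pred1_eq.
Qed.

Section PolarCharacter.
Variables (R : realType) (n : nat).
Implicit Types (z : R[i]) (u v : 'rV[R]_n).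

Definition pcchar z u : R[i] := \sum_(j < n) (u 0 j)%:C * z ^+ j.
Arguments pcchar : simpl never.

Lemma pcchar_is_zmod_morphism z : zmod_morphism (pcchar z).
Proof.
by move=> u v; rewrite /pcchar -sumrB; apply: eq_bigr => j _; rewrite !mxE rmorphB mulrBl.
Qed.

HB.instance Definition _ z :=
  GRing.isZmodMorphism.Build _ _ (pcchar z) (pcchar_is_zmod_morphism z).

Lemma pcchar_series z (f : nat -> 'rV[R]_n) N :
  pcchar z (series f N) = \sum_(0 <= l < N) pcchar z (f l).
Proof. exact: raddf_sum. Qed.

Lemma pccharZ z r u : pcchar z (r *: u) = r%:C * pcchar z u.
Proof. by rewrite /pcchar mulr_sumr; apply: eq_bigr => j _; rewrite !mxE rmorphM mulrA. Qed.

Lemma pcchar_basis z j : pcchar z (pcbasis R j) = z ^+ j.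
Proof.
rewrite /pcchar (bigD1 j) //= big1 ?addr0 => [|k /negbTE nkj].
  by rewrite !mxE !eqxx mul1r.
by rewrite !mxE nkj mul0r.
Qed.

Lemma pcchar_norm_le z u : normc z = 1 -> normc (pcchar z u) <= n%:R * `|u|.
Proof.
move=> z1; apply: le_trans (normc_sum _ _) _.
have -> : n%:R * `|u| = \sum_(j < n) `|u| by rewrite sumr_const card_ord mulr_natl.
apply: ler_sum => j _.
by rewrite normcM normcX z1 expr1n mulr1 normc_real norm_entry_le.
Qed.

Lemma pcchar_pcone z : (0 < n)%N -> pcchar z (pcone R n) = 1.
Proof. by move=> n0; rewrite (pcone_basis R n0) pcchar_basis. Qed.

Section UnityRoot.
Variable z : R[i].
Hypothesis zn : z ^+ n = 1.

Lemma pcchar_pcmul u v : pcchar z (pcmul u v) = pcchar z u * pcchar z v.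
Proof.
rewrite /pcchar big_distrlr /=.
transitivity (\sum_(m < n) \sum_(j < n) \sum_(k < n)
    if ((j + k) %% n)%N == m then (u 0 j * v 0 k)%:C * z ^+ ((j + k) %% n) else 0).
  apply: eq_bigr => m _; rewrite mxE rmorph_sum mulr_suml; apply: eq_bigr => j _.
  rewrite rmorph_sum mulr_suml big_mkcond; apply: eq_bigr => k _.
  by case: eqP => [->|].
rewrite exchange_big; apply: eq_bigr => j _; rewrite exchange_big; apply: eq_bigr => k _.
have n0 : (0 < n)%N by apply: leq_ltn_trans (ltn_ord j).
rewrite -big_mkcond (big_pred1 (Ordinal (ltn_pmod (j + k) n0))) => [|m]; last first.
  by rewrite /= -val_eqE eq_sym.
by rewrite expr_mod // exprD rmorphM mulrACA.
Qed.

Lemma pcchar_pcpow u l : (0 < n)%N -> pcchar z (pcpow u l) = pcchar z u ^+ l.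
Proof.
move=> n0; elim: l => [|l IH]; first by rewrite pcchar_pcone.
by rewrite /pcpow iterS -/(pcpow u l) pcchar_pcmul IH exprS.
Qed.

End UnityRoot.
End PolarCharacter.

Section Inversion.
Variables (R : realType) (n : nat) (w : R[i]).
Hypothesis pw : n.-primitive_root w.

Lemma prim_exprX_order p : (w ^+ p) ^+ n = 1.
Proof. by rewrite -exprM mulnC exprM (prim_expr_order pw) expr1n. Qed.

Lemma normc_prim_exprX p : normc (w ^+ p) = 1.
Proof. exact: normc_unity_root (prim_order_gt0 pw) (prim_exprX_order p). Qed.

Lemma pcchar_inversion (u : 'rV[R]_n) (k : 'I_n) :
  n%:R * (u 0 k)%:C = \sum_(p < n) pcchar (w ^+ p) u * (w ^+ p) ^+ (n - k).
Proof.
transitivity (\sum_(j < n) (u 0 j)%:C * \sum_(p < n) (w ^+ (j + (n - k))) ^+ p).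
  rewrite (bigD1 k) //= sum_expr_prim_root // dvdn_add_subn_ord eqxx big1 ?addr0.
    by rewrite mulrC.
  by move=> j /negbTE njk; rewrite sum_expr_prim_root // dvdn_add_subn_ord njk mulr0.
under [RHS]eq_bigr do rewrite mulr_suml.
rewrite [RHS]exchange_big; apply: eq_bigr => j _; rewrite mulr_sumr.
apply: eq_bigr => p _.
by rewrite -mulrA -exprD -!exprM mulnC.
Qed.

Lemma norm_le_sum_pcchar (u : 'rV[R]_n) :
  `|u| <= \sum_(p < n) normc (pcchar (w ^+ p) u).
Proof.
apply: norm_le_entries => [|k]; first by apply: sumr_ge0 => p _; apply: normc_ge0.
have n_ge1 : 1 <= n%:R :> R by rewrite ler1n (prim_order_gt0 pw).
apply: (@le_trans _ _ (n%:R * `|u 0 k|)); first by rewrite ler_peMl.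
rewrite -[n%:R]normr_nat -normrM -normc_real rmorphM rmorph_nat pcchar_inversion.
apply: le_trans (normc_sum _ _) _; apply: ler_sum => p _.
by rewrite normcM normcX normc_prim_exprX expr1n mulr1.
Qed.

End Inversion.

Lemma exprD_sub_linear (F : comPzRingType) (c h : F) l :
  (c + h) ^+ l.+1 - c ^+ l.+1 - l.+1%:R * c ^+ l * h =
  \sum_(i < l) c ^+ (l - i.+1) * h ^+ i.+2 *+ 'C(l.+1, i.+2).
Proof.
rewrite exprDn !big_ord_recl /= bin0 bin1 expr0 expr1 mulr1 mulr1n.
under eq_bigr do rewrite /bump /= !add1n subSS.
rewrite subn0 /bump /= subn1 /= -mulr_natr; ring.
Qed.

Lemma linear_term_le_exprD (F : realDomainType) (x r : F) l :
  0 <= x -> 0 <= r -> l%:R * x ^+ l.-1 * r <= (x + r) ^+ l.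
Proof.
move=> x0 r0; case: l => [|l]; first by rewrite !mul0r expr0.
rewrite -mulrA mulr_natl exprDn !big_ord_recl /bump /= bin1 subn1 expr1 addrCA lerDl.
by rewrite addr_ge0 ?sumr_ge0 // => *; rewrite mulrn_wge0 // mulr_ge0 // exprn_ge0.
Qed.

Lemma normc_exprD_sub_linear_le (R : rcfType) (c e : R[i]) (t r : R) l :
  normc e <= 1 -> 0 < r -> `|t| <= r ->
  normc ((c + t%:C * e) ^+ l - c ^+ l - t%:C * (l%:R * c ^+ l.-1 * e))
    <= (t / r) ^+ 2 * (normc c + r) ^+ l.
Proof.
move=> e_le1 r_gt0 le_tr; have c_ge0 := normc_ge0 c; have r_ge0 := ltW r_gt0.
case: l => [|l].
  by rewrite !mul0r mulr0 !subrr normc0 mulr_ge0 ?sqr_ge0 ?exprn_ge0 ?addr_ge0.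
rewrite [_ - _ - _](_ : _ = (c + t%:C * e) ^+ l.+1 - c ^+ l.+1
  - l.+1%:R * c ^+ l * (t%:C * e)) /=; last by ring.
rewrite exprD_sub_linear; apply: le_trans (normc_sum _ _) _.
apply: (@le_trans _ _ (\sum_(i < l)
    (t / r) ^+ 2 * (normc c ^+ (l - i.+1) * r ^+ i.+2 *+ 'C(l.+1, i.+2)))).
  apply: ler_sum => i _.
  rewrite normcMn normcM !normcX normcM normc_real.
  rewrite [X in _ <= X]mulrnAr [X in _ <= X *+ _]mulrCA.
  apply: ler_wMn2r; apply: ler_wpM2l; first exact: exprn_ge0.
  have t_le : `|t| ^+ i.+2 <= (t / r) ^+ 2 * r ^+ i.+2.
    have -> : (t / r) ^+ 2 * r ^+ i.+2 = `|t| ^+ 2 * r ^+ i.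
      by rewrite -[i.+2]addn2 exprD real_normK ?num_real //; field; rewrite gt_eqF.
    by rewrite -[i.+2]addn2 exprD mulrC ler_wpM2l ?exprn_ge0 // lerXn2r // nnegrE.
  apply: le_trans t_le; rewrite exprMn ler_piMr ?exprn_ge0 //.
  exact: exprn_ile1 (normc_ge0 e) e_le1.
rewrite -mulr_sumr ler_wpM2l ?sqr_ge0 // exprDn !big_ord_recl /bump /=.
under [X in _ <= _ + (_ + X)]eq_bigr do rewrite subSS.
rewrite addrA lerDr.
by rewrite addr_ge0 // mulrn_wge0 // mulr_ge0 // exprn_ge0 // addr_ge0.
Qed.

Section PowerSeries.
Variables (R : realType) (n : nat) (a : nat -> 'rV[R]_n) (u0 x : 'rV[R]_n) (w : R[i]).
Hypothesis pw : n.-primitive_root w.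
Local Notation chi p := (pcchar (w ^+ p)).
Local Notation c p := (chi p (x - u0)).

Let n_gt0 : (0 < n)%N := prim_order_gt0 pw.

Lemma pcchar_pcterm p y l : chi p (pcterm a u0 y l) = chi p (a l) * chi p (y - u0) ^+ l.
Proof. by rewrite pcchar_pcmul ?prim_exprX_order // pcchar_pcpow ?prim_exprX_order. Qed.

(* The image of f under [chi p] is the complex power series sum_l chi p (a l) z^l
   in z = chi p (u - u0); [majorant p r] is its series of absolute values on the
   circle |z| = |c p| + r. *)
Definition majorant p r N :=
  \sum_(0 <= l < N) normc (chi p (a l)) * (normc (c p) + r) ^+ l.

Lemma majorant0 p r : majorant p r 0 = 0.
Proof. by rewrite /majorant big_geq. Qed.

Lemma le_majorant p r r' N : 0 <= r -> r <= r' -> majorant p r N <= majorant p r' N.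
Proof.
move=> r0 le_rr'; apply: ler_sum => l _; apply: ler_wpM2l; first exact: normc_ge0.
by apply: lerXn2r; rewrite ?nnegrE ?addr_ge0 ?normc_ge0 ?lerD // (le_trans r0).
Qed.

Lemma majorant_bounded_at p r y : cvgn (series (fun l => `|pcterm a u0 y l|)) ->
  0 <= r -> normc (c p) + r <= normc (chi p (y - u0)) ->
  exists M, forall N, majorant p r N <= M.
Proof.
move=> cvg_y r0 le_cy; set S := series (fun l => `|pcterm a u0 y l|).
have S_nd : nondecreasing_seq S by apply: nondecreasing_series => l _ _.
exists (n%:R * limn S) => N; apply: (@le_trans _ _ (n%:R * S N)).
  rewrite /S /series /= mulr_sumr; apply: ler_sum => l _.
  apply: le_trans (pcchar_norm_le _ (normc_prim_exprX pw p)).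
  rewrite pcchar_pcterm normcM normcX; apply: ler_wpM2l; first exact: normc_ge0.
  by apply: lerXn2r; rewrite // nnegrE ?addr_ge0 ?normc_ge0.
by apply: ler_wpM2l => //; apply: nondecreasing_cvgn_le.
Qed.

Definition pcderiv_term l := l%:R *: pcmul (a l) (pcpow (x - u0) l.-1).

Lemma pcchar_pcderiv_term p l :
  chi p (pcderiv_term l) = l%:R * (chi p (a l) * c p ^+ l.-1).
Proof.
rewrite pccharZ pcchar_pcmul ?prim_exprX_order //.
by rewrite pcchar_pcpow ?prim_exprX_order // rmorph_nat.
Qed.

Lemma normc_pcchar_pcderiv_term_le p r l : 0 <= r ->
  normc (chi p (pcderiv_term l)) * r <= normc (chi p (a l)) * (normc (c p) + r) ^+ l.
Proof.
move=> r_ge0; rewrite pcchar_pcderiv_term !normcM normcX normc_nat mulrCA -mulrA.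
by apply: ler_wpM2l; rewrite ?normc_ge0 // linear_term_le_exprD ?normc_ge0.
Qed.

Lemma cvg_series_pcderiv_term r M : 0 < r ->
  (forall (p : 'I_n) N, majorant p r N <= M) -> cvgn (series pcderiv_term).
Proof.
move=> r_gt0 le_M; apply: normed_cvg_rV; apply: nondecreasing_is_cvgn.
  by apply: nondecreasing_series => l _ _.
exists (n%:R * M / r) => _ [N _ <-].
apply: (@le_trans _ _ (\sum_(p < n) majorant p r N / r)).
  rewrite /series /majorant /=; under [X in _ <= X]eq_bigr do rewrite mulr_suml.
  rewrite exchange_big; apply: ler_sum => l _.
  apply: le_trans (norm_le_sum_pcchar pw _) _; apply: ler_sum => p _.
  by rewrite ler_pdivlMr // normc_pcchar_pcderiv_term_le // ltW.
rewrite -mulr_suml; apply: ler_wpM2r; first by rewrite invr_ge0 ltW.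
have -> : n%:R * M = \sum_(p < n) M by rewrite sumr_const card_ord mulr_natl.
exact: ler_sum.
Qed.

Lemma normc_pcchar_diff_quotient_term_le p r t (j : 'I_n) l :
  0 < r -> t != 0 -> `|t| <= r ->
  normc (chi p (t^-1 *: (pcterm a u0 (t *: pcbasis R j + x) l - pcterm a u0 x l)
                - pcmul (pcderiv_term l) (pcbasis R j)))
  <= `|t| / r ^+ 2 * (normc (chi p (a l)) * (normc (c p) + r) ^+ l).
Proof.
move=> r_gt0 tn0 le_tr.
rewrite raddfB /= pccharZ raddfB /= !pcchar_pcterm pcchar_pcmul ?prim_exprX_order //.
rewrite pcchar_pcderiv_term pcchar_basis [t *: _ + x]addrC addrAC raddfD /= pccharZ.
rewrite pcchar_basis; set b := chi p (a l); set e := (w ^+ p) ^+ j; set z := c p.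
have tC : t%:C != 0 by rewrite (inj_eq (@complexI _)).
rewrite (_ : _ - _ = b * t%:C^-1 *
    ((z + t%:C * e) ^+ l - z ^+ l - t%:C * (l%:R * z ^+ l.-1 * e))); last first.
  by rewrite fmorphV /=; field.
have e_le1 : normc e <= 1 by rewrite normcX (normc_prim_exprX pw) expr1n.
have le_N := normc_exprD_sub_linear_le z l e_le1 r_gt0 le_tr.
rewrite !normcM normcV normc_real.
have -> : `|t| / r ^+ 2 * (normc b * (normc z + r) ^+ l) =
    normc b * `|t|^-1 * ((t / r) ^+ 2 * (normc z + r) ^+ l).
  rewrite expr_div_n -[t ^+ 2]real_normK ?num_real //.
  by field; rewrite normr_eq0 tn0 gt_eqF.
by apply: ler_wpM2l => //; rewrite mulr_ge0 ?normc_ge0 ?invr_ge0.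
Qed.

Lemma norm_diff_quotient_series_le r M t (j : 'I_n) N :
  0 < r -> (forall (p : 'I_n) N, majorant p r N <= M) -> t != 0 -> `|t| <= r ->
  `|t^-1 *: (series (pcterm a u0 (t *: pcbasis R j + x)) N - series (pcterm a u0 x) N)
    - pcmul (series pcderiv_term N) (pcbasis R j)| <= `|t| * (n%:R * M / r ^+ 2).
Proof.
move=> r_gt0 le_M tn0 le_tr; apply: le_trans (norm_le_sum_pcchar pw _) _.
have -> : `|t| * (n%:R * M / r ^+ 2) = \sum_(p < n) `|t| / r ^+ 2 * M.
  by rewrite sumr_const card_ord -mulr_natr; ring.
apply: ler_sum => p _.
set q := fun l => t^-1 *: (pcterm a u0 (t *: pcbasis R j + x) l - pcterm a u0 x l)
                  - pcmul (pcderiv_term l) (pcbasis R j).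
have -> : chi p (t^-1 *: (series (pcterm a u0 (t *: pcbasis R j + x)) N
    - series (pcterm a u0 x) N) - pcmul (series pcderiv_term N) (pcbasis R j))
    = \sum_(0 <= l < N) chi p (q l).
  rewrite raddfB /= pccharZ raddfB /= pcchar_pcmul ?prim_exprX_order // !pcchar_series.
  rewrite mulr_suml -sumrB mulr_sumr -sumrB.
  apply: eq_bigr => l _; rewrite /q [in RHS]raddfB /= [in RHS]pccharZ [in RHS]raddfB /=.
  by rewrite !pcchar_pcterm pcchar_pcmul ?prim_exprX_order.
apply: le_trans (normc_sum _ _) _.
apply: (@le_trans _ _ (\sum_(0 <= l < N)
    `|t| / r ^+ 2 * (normc (chi p (a l)) * (normc (c p) + r) ^+ l))).
  by apply: ler_sum => l _; apply: normc_pcchar_diff_quotient_term_le.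
by rewrite -mulr_sumr; apply: ler_wpM2l; rewrite ?divr_ge0 ?sqr_ge0 ?le_M.
Qed.

Section NearCenter.
Variable δ : R.
Hypothesis δ_gt0 : 0 < δ.
Hypothesis cvg_near :
  forall y, `|y - x| < δ -> cvgn (series (fun l => `|pcterm a u0 y l|)).

(* Moving from x radially away from u0 (or along h_0 when c p = 0) increases
   |c p| while staying in the region of absolute convergence. *)
Lemma majorant_bounded_near p :
  exists2 r, 0 < r & exists M, forall N, majorant p r N <= M.
Proof.
pose e := δ / (`|x - u0| + 2).
have e_gt0 : 0 < e by rewrite divr_gt0 // ltr_wpDl.
have cvg_shift v : `|v| <= `|x - u0| + 1 ->
    cvgn (series (fun l => `|pcterm a u0 (x + e *: v) l|)).
  move=> le_v; apply: cvg_near; rewrite addrAC subrr add0r normrZ gtr0_norm //.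
  apply: (@le_lt_trans _ _ (e * (`|x - u0| + 1))); first by rewrite ler_wpM2l // ltW.
  by rewrite /e mulrAC ltr_pdivrMr ?ltr_wpDl // ltr_pM2l // ltrD2l ltr1n.
have [cp0 | cpn0] := eqVneq (c p) 0.
  exists e => //; apply: (@majorant_bounded_at p e (x + e *: pcone R n)).
  - rewrite (pcone_basis R n_gt0); apply: cvg_shift.
    by apply: le_trans (norm_pcbasis_le1 _ _) _; rewrite lerDr.
  - exact: ltW.
  rewrite cp0 normc0 add0r addrAC raddfD /= cp0 add0r pccharZ (pcone_basis R n_gt0).
  by rewrite pcchar_basis mulr1 normc_real gtr0_norm.
have cp_gt0 : 0 < normc (c p).
  by rewrite lt_def normc_ge0 andbT; apply: contra cpn0 => /eqP/eq0_normc ->.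
exists (e * normc (c p)); first exact: mulr_gt0.
apply: (@majorant_bounded_at p _ (x + e *: (x - u0))).
- by apply/cvg_shift; rewrite lerDl.
- exact/ltW/mulr_gt0.
have -> : x + e *: (x - u0) - u0 = (1 + e) *: (x - u0) by rewrite scalerDl scale1r addrAC.
by rewrite pccharZ normcM normc_real gtr0_norm ?addr_gt0 // mulrDl mul1r.
Qed.

Lemma majorant_uniform_bound :
  exists2 r, 0 < r & exists M, forall (p : 'I_n) N, majorant p r N <= M.
Proof.
have /choice[rM hrM] : forall p : 'I_n,
    exists rM : R * R, 0 < rM.1 /\ forall N, majorant p rM.1 N <= rM.2.
  by move=> p; have [r r_gt0 [M hM]] := majorant_bounded_near p; exists (r, M).
have r_gt0 : 0 < \big[Order.min/1]_p (rM p).1.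
  by apply: lt_bigmin => // p _; case: (hrM p).
exists (\big[Order.min/1]_p (rM p).1) => //; exists (\sum_p (rM p).2) => p N.
have M_ge0 q : 0 <= (rM q).2 by case: (hrM q) => _ /(_ 0%N); rewrite majorant0.
apply: le_trans (le_majorant p N (ltW r_gt0) (bigmin_le _ p _)) _.
apply: le_trans (proj2 (hrM p) N) _.
by rewrite (bigD1 p) //= lerDl sumr_ge0.
Qed.

Lemma dist_diff_quotient_le r M t (k j i : 'I_n) : (i : nat) = ((k + j) %% n)%N ->
  0 < r -> (forall (p : 'I_n) N, majorant p r N <= M) -> t != 0 -> `|t| <= r -> `|t| < δ ->
  `|limn (series pcderiv_term) 0 k
    - t^-1 * (pccomp a u0 i (t *: pcbasis R j + x) - pccomp a u0 i x)|
  <= `|t| * (n%:R * M / r ^+ 2).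
Proof.
move=> hi r_gt0 le_M tn0 le_tr lt_tδ; set y := t *: pcbasis R j + x.
have cvg_y : cvgn (series (pcterm a u0 y)).
  apply/normed_cvg_rV/cvg_near; rewrite addrK normrZ; apply: le_lt_trans lt_tδ.
  by rewrite ler_piMr // norm_pcbasis_le1.
have cvg_x : cvgn (series (pcterm a u0 x)).
  by apply/normed_cvg_rV/cvg_near; rewrite subrr normr0.
have lim_D := cvg_rV_entry (m := k) (cvg_series_pcderiv_term r_gt0 le_M).
have lim_q : (fun N => (t^-1 *: (series (pcterm a u0 y) N - series (pcterm a u0 x) N)) 0 i)
    @ \oo --> t^-1 * (pccomp a u0 i y - pccomp a u0 i x).
  rewrite (_ : _ * _ = (t^-1 *: (pcseries a u0 y - pcseries a u0 x)) 0 i); last first.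
    by rewrite !mxE.
  by apply: cvg_rV_entry; apply: cvgZ; [exact: cvg_cst | exact: cvgB].
apply: (ler_cvg_to (cvg_norm (cvgB lim_D lim_q)) (cvg_cst _)); apply: nearW => N /=.
rewrite !fctE -(pcmul_basis_entry _ hi) distrC.
rewrite (_ : _ - _ = (t^-1 *: (series (pcterm a u0 y) N - series (pcterm a u0 x) N)
  - pcmul (series pcderiv_term N) (pcbasis R j)) 0 i); last by rewrite !mxE.
by apply: le_trans (norm_entry_le _ _) _; apply: norm_diff_quotient_series_le.
Qed.

Lemma is_derive_pccomp (k j i : 'I_n) : (i : nat) = ((k + j) %% n)%N ->
  is_derive x (pcbasis R j) (pccomp a u0 i) (limn (series pcderiv_term) 0 k).
Proof.
move=> hi; have [r r_gt0 [M le_M]] := majorant_uniform_bound.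
have M_ge0 : 0 <= M by have := le_M (Ordinal n_gt0) 0%N; rewrite majorant0.
set K := n%:R * M / r ^+ 2; have K_ge0 : 0 <= K by rewrite divr_ge0 ?sqr_ge0 ?mulr_ge0.
suff cvg_dq : (fun t => t^-1 *: ((pccomp a u0 i \o shift x) (t *: pcbasis R j)
    - pccomp a u0 i x)) @ 0^' --> limn (series pcderiv_term) 0 k.
  by split; [exact: cvgP cvg_dq | exact: cvg_lim cvg_dq].
apply/cvgrPdist_le => eps eps_gt0; near=> t.
have tn0 : t != 0 by near: t; exact: nbhs_dnbhs_neq.
have : `|t| < Num.min δ (Num.min r (eps / (K + 1))).
  by near: t; apply: dnbhs0_lt; rewrite !lt_min δ_gt0 r_gt0 divr_gt0 // ltr_wpDl.
rewrite !lt_min => /and3P[lt_tδ lt_tr lt_teps].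
apply: le_trans (dist_diff_quotient_le hi r_gt0 le_M tn0 (ltW lt_tr) lt_tδ) _.
apply: (@le_trans _ _ (`|t| * (K + 1))); first by rewrite ler_wpM2l // lerDl.
by rewrite -ler_pdivlMr ?ltr_wpDl //; exact: ltW.
Unshelve. all: by end_near.
Qed.

End NearCenter.
End PowerSeries.

Theorem mainTheorem15 (R : realType) (n : nat) (hn : (2 <= n)%N)
  (a : nat -> 'rV[R]_n) (u0 : 'rV[R]_n) (U : set 'rV[R]_n)
  (hU : open U)
  (habs : forall u, U u -> cvgn (series (fun l => `| pcterm a u0 u l |))) :
  forall x, U x ->
  forall (k j1 j2 i1 i2 : 'I_n),
    (i1 : nat) = ((k + j1) %% n)%N -> (i2 : nat) = ((k + j2) %% n)%N ->
    derivable (pccomp a u0 i1) x (pcbasis R j1) /\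
    'D_(pcbasis R j1) (pccomp a u0 i1) x = 'D_(pcbasis R j2) (pccomp a u0 i2) x.
Proof.
move=> x Ux k j1 j2 i1 i2 hi1 hi2.
have [w pw] := closed_prim_root_exists R[i] (ltnW hn).
have [δ δ_gt0 ball_U] : exists2 δ : R, 0 < δ & forall y, `|y - x| < δ -> U y.
  move: hU; rewrite openE => /(_ x Ux) /nbhs_ballP [e /= e_gt0 sub_U].
  by exists e => // y lt_yx; apply: sub_U; rewrite mx_norm_ball /ball_ /= distrC.
have cvg_near y : `|y - x| < δ -> cvgn (series (fun l => `|pcterm a u0 y l|)).
  by move=> /ball_U /habs.
have D1 := is_derive_pccomp pw δ_gt0 cvg_near hi1.
have D2 := is_derive_pccomp pw δ_gt0 cvg_near hi2.
by split; [exact: ex_derive | rewrite !derive_val].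
Qed.
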